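(* Let $W$ be a finite connected CW-complex, $Q$ the Hilbert cube, and let $\tilde\varphi: S^d\times W\times Q\to S^d\times W\times Q$, $\tilde\varphi(s,w)=(\varphi(s),h_s(w))$, be a minimal homeomorphism, where $h:S^d\to\mathrm{Homeo}(W\times Q)$ is continuous. Then the homeomorphism $\tilde\zeta: Z\times W\times Q\to Z\times W\times Q$, $\tilde\zeta(z,w)=(\zeta(z),h_{q(z)}(w))$, is minimal.
   Context: Fix an odd integer $d\ge3$ and a minimal diffeomorphism $\varphi:S^d\to S^d$. $(Z,\zeta)$ is the point-like minimal system of Deeley–Putnam–Strung associated to $\varphi$: there is a $\varphi$-invariant subset $L_\infty\subset S^d$ (the image of an injective immersion of $\mathbb{R}$); $Z$ is a compact metric space obtained by completing $S^d\setminus L_\infty$ with respect to a suitable metric, so that $S^d\setminus L_\infty$ is a dense subset of $Z$; $\zeta$ is the minimal homeomorphism of $Z$ extending $\varphi|_{S^d\setminus L_\infty}$; $Z$ has the Čech cohomology and $K$-theory of a point; and $q:Z\to S^d$ is an almost one-to-one factor map ($q\circ\zeta=\varphi\circ q$) which is the identity, in particular injective, on $S^d\setminus L_\infty$. A homeomorphism is minimal if it has no proper nonempty closed invariant subsets. *)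

From HB Require Import structures.
From mathcomp Require Import all_boot all_order all_algebra.
From mathcomp Require Import all_classical all_reals all_analysis.
Set Implicit Arguments. Unset Strict Implicit. Unset Printing Implicit Defensive.
Import Order.TTheory GRing.Theory Num.Theory.
Import numFieldNormedType.Exports.
Local Open Scope classical_set_scope.
Local Open Scope ring_scope.

Fixpoint iderive (R : realType) (V W : normedModType R)
    (vs : seq V) (f : V -> W) : V -> W :=
  match vs with
  | [::] => f
  | v :: vs' => fun x => derive (iderive vs' f) x v
  end.

Definition smooth (R : realType) (V W : normedModType R) (f : V -> W) :=
  forall vs : seq V,
    continuous (iderive vs f) /\ (forall (v x : V), derivable (iderive vs f) x v).

Definition sphere (R : realType) (d : nat) : set 'rV[R]_(d.+1) :=
  [set x | \sum_(i < d.+1) (x ord0 i) ^+ 2 = 1].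
Arguments sphere : clear implicits.

Definition closed_in (T : topologicalType) (A C : set T) :=
  exists D : set T, closed D /\ C = A `&` D.

Definition minimal_on (T : topologicalType) (A : set T) (f : T -> T) :=
  forall C : set T, C `<=` A -> closed_in A C -> C !=set0 -> f @` C = C ->
    C = A.

Definition homeo_on (T : topologicalType) (A : set T) (f g : T -> T) :=
  [/\ f @` A = A, g @` A = A, {in A, cancel f g} & {in A, cancel g f}] /\
  {within A, continuous f} /\ {within A, continuous g}.

Definition sphere_diffeo (R : realType) (d : nat)
    (f : 'rV[R]_(d.+1) -> 'rV[R]_(d.+1)) :=
  exists g : 'rV[R]_(d.+1) -> 'rV[R]_(d.+1),
    homeo_on (sphere R d) f g /\
    exists F G : 'rV[R]_(d.+1) -> 'rV[R]_(d.+1),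
      smooth F /\ smooth G /\
      {in sphere R d, F =1 f} /\ {in sphere R d, G =1 g}.

Definition injective_immersed_line (R : realType) (d : nat)
    (L : set 'rV[R]_(d.+1)) :=
  exists gamma : R^o -> 'rV[R]_(d.+1),
    smooth gamma /\ injective gamma /\ (forall t : R^o, derive gamma t 1 != 0) /\
    range gamma = L.

Definition hilbert_cube (R : realType) : set {ptws nat -> R} :=
  [set x | forall n, 0 <= x n <= 1].
Arguments hilbert_cube : clear implicits.

(* h : S -> Homeo(X) continuous (compact-open topology, X compact Hausdorff):
   each h s is a homeomorphism of X with inverse hi s, and both
   (s,x) |-> h s x and (s,x) |-> hi s x are jointly continuous on S x X. *)
Definition cont_homeo_family (S X : topologicalType) (A : set S) (B : set X)
    (h hi : S -> X -> X) :=
  (forall s, A s -> homeo_on B (h s) (hi s)) /\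
  {within A `*` B, continuous (fun p : S * X => h p.1 p.2)} /\
  {within A `*` B, continuous (fun p : S * X => hi p.1 p.2)}.

From HB Require Import structures.
From mathcomp Require Import all_boot all_order all_algebra.
From mathcomp Require Import all_classical all_reals all_analysis.
Set Implicit Arguments. Unset Strict Implicit. Unset Printing Implicit Defensive.
Import Order.TTheory GRing.Theory Num.Theory.
Import numFieldNormedType.Exports.
Local Open Scope classical_set_scope.
Local Open Scope ring_scope.

(* Let C be a nonempty closed invariant subset of Z x W x Q.  Its image under
   q x id is compact, hence closed, nonempty and invariant, so by minimality of
   the skew product over S^d it is all of S^d x W x Q.  If q is injective at z,
   the only point of C above (q z, x) is therefore (z, x), so each slice
   {z | (z, x) in C} is a closed set containing the injectivity points of q;
   these are dense, so the slice is all of Z and C is everything. *)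

Lemma prod_hausdorff (U V : topologicalType) :
  hausdorff_space U -> hausdorff_space V -> hausdorff_space (U * V)%type.
Proof.
move=> hU hV [u1 v1] [u2 v2]; rewrite cluster_cvgE => -[G PG [G_u2 G_u1]].
congr pair.
- apply: hU; rewrite cluster_cvgE; exists (fst @ G); first exact: fmap_proper_filter.
  split; first exact: cvg_trans (cvg_app fst G_u2) cvg_fst.
  exact: cvg_trans (cvg_app fst G_u1) cvg_fst.
- apply: hV; rewrite cluster_cvgE; exists (snd @ G); first exact: fmap_proper_filter.
  split; first exact: cvg_trans (cvg_app snd G_u2) cvg_snd.
  exact: cvg_trans (cvg_app snd G_u1) cvg_snd.
Qed.

Lemma hilbert_cube_compact (R : realType) : compact (hilbert_cube R).
Proof.
have -> : hilbert_cube R = [set f | forall i, (`[0, 1]%classic : set R) (f i)].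
  by apply/seteqP; split => f /= f01 i; move: (f01 i); rewrite /= in_itv.
apply: (@tychonoff nat (fun _ => R) (fun _ => `[0, 1]%classic)) => _.
exact: segment_compact.
Qed.

Lemma closed_slice (T U : topologicalType) (D : set (T * U)) (u : U) :
  closed D -> closed [set t | D (t, u)].
Proof.
move=> clD; apply: (preimage_closed (f := fun t => (t, u))) => // t _.
by apply: (@cvg_pair _ _ _ (nbhs t) (nbhs t) (nbhs u)); [exact: cvg_id | exact: cvg_cst].
Qed.

Lemma dense_sub_closed_setT (T : topologicalType) (G S : set T) :
  dense G -> closed S -> G `<=` S -> S = setT.
Proof.
move=> dG clS GS; apply/seteqP; split => // t _; apply: contrapT => St.
have [s [nSs Gs]] := dG (~` S) (ex_intro _ t St) (closed_openC clS).
exact: nSs (GS _ Gs).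
Qed.

Lemma image_semiconj_invariant (T U : Type) (f : T -> T) (g : U -> U)
    (p : T -> U) (C : set T) :
  (forall t, p (f t) = g (p t)) -> f @` C = C -> g @` (p @` C) = p @` C.
Proof.
move=> pf fC; rewrite image_comp -[in RHS]fC image_comp.
by apply: eq_imagel => t _ /=; rewrite pf.
Qed.

Section SkewProductLift.
Variables (Z U X : topologicalType) (zeta : Z -> Z) (phi : U -> U).
Variables (q : Z -> U) (h : U -> X -> X) (A : set U) (B : set X).
Hypothesis UX_hausdorff : hausdorff_space (U * X)%type.
Hypotheses (Z_compact : compact [set: Z]) (B_compact : compact B).
Hypotheses (q_cont : continuous q) (q_range : range q `<=` A).
Hypothesis q_semiconj : forall z, q (zeta z) = phi (q z).
Hypothesis q_injective_dense :
  dense [set z | forall z' : Z, q z' = q z -> z' = z].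
Hypothesis skew_minimal :
  minimal_on (A `*` B) (fun p => (phi p.1, h p.1 p.2)).

Let qxid (p : Z * X) := (q p.1, p.2).

Lemma continuous_qxid : continuous qxid.
Proof.
move=> [z x]; apply: (@cvg_pair _ _ _ (nbhs (z, x)) (nbhs (q z)) (nbhs x)).
- by apply: cvg_comp (@cvg_fst _ _ (nbhs z) (nbhs x) _) _; exact: q_cont.
- exact: (@cvg_snd _ _ (nbhs z) (nbhs x) _).
Qed.

Section InvariantSet.
Variable C : set (Z * X).
Hypotheses (C_sub : C `<=` [set: Z] `*` B) (C_closed : closed_in ([set: Z] `*` B) C).
Hypothesis C_nonempty : C !=set0.
Hypothesis C_invariant : (fun p => (zeta p.1, h (q p.1) p.2)) @` C = C.

Lemma image_qxid_full : qxid @` C = A `*` B.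
Proof.
have C_compact : compact C.
  have [D [clD ->]] := C_closed.
  by apply: compact_closedI => //; exact: compact_setX.
have PC_closed : closed (qxid @` C).
  apply: compact_closed => //; apply: continuous_compact => //.
  exact: continuous_subspaceT continuous_qxid.
have PC_sub : qxid @` C `<=` A `*` B.
  by move=> _ [c /C_sub [_ Bc] <-]; split => //=; apply: q_range; exists c.1.
apply: skew_minimal => //.
- by exists (qxid @` C); split; last rewrite setIidr.
- by case: C_nonempty => c Cc; exists (qxid c), c.
- by apply: image_semiconj_invariant C_invariant => -[z x]; rewrite /qxid /= q_semiconj.
Qed.

Lemma slice_contains_injective_points (z : Z) (x : X) :
  (forall z' : Z, q z' = q z -> z' = z) -> B x -> C (z, x).
Proof.
move=> q_inj_z Bx.
have : (A `*` B) (q z, x) by split => //; apply: q_range; exists z.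
by rewrite -image_qxid_full => -[[z' x'] Cc [/q_inj_z <- <-]].
Qed.

End InvariantSet.

Lemma minimal_on_skew_lift :
  minimal_on ([set: Z] `*` B) (fun p => (zeta p.1, h (q p.1) p.2)).
Proof.
move=> C C_sub C_closed C_nonempty C_invariant.
have [D [clD C_eq]] := C_closed.
apply/seteqP; split => // -[z x] [_ Bx].
suff slice_full : [set z' | D (z', x)] = setT.
  by rewrite C_eq; split => //; have : [set: Z] z by []; rewrite -slice_full.
apply: dense_sub_closed_setT q_injective_dense (closed_slice (u := x) clD) _ => g q_inj_g.
have := slice_contains_injective_points C_sub C_closed C_nonempty C_invariant q_inj_g Bx.
by rewrite C_eq => -[].
Qed.

End SkewProductLift.

Theorem proposition2p8 (R : realType) (d : nat)
  (phi : 'rV[R]_(d.+1) -> 'rV[R]_(d.+1))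
  (L : set 'rV[R]_(d.+1))
  (Z : pseudoMetricType R) (zeta zetainv : Z -> Z)
  (q : Z -> 'rV[R]_(d.+1)) (j : 'rV[R]_(d.+1) -> Z)
  (W : topologicalType)
  (h hinv : 'rV[R]_(d.+1) -> W * {ptws nat -> R} -> W * {ptws nat -> R}) :
  (* d odd, d >= 3; phi a minimal diffeomorphism of S^d *)
  odd d -> (3 <= d)%N ->
  sphere_diffeo phi -> minimal_on (sphere R d) phi ->
  (* L_infty: phi-invariant injectively immersed line in S^d *)
  L `<=` sphere R d -> injective_immersed_line L -> phi @` L = L ->
  (* Z compact metric; j identifies S^d \ L_infty with a dense subset of Z *)
  hausdorff_space Z -> compact [set: Z] ->
  {in sphere R d `\` L &, injective j} ->
  dense (j @` (sphere R d `\` L)) ->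
  (* zeta minimal homeomorphism of Z extending phi on S^d \ L_infty *)
  homeo_on [set: Z] zeta zetainv -> minimal_on [set: Z] zeta ->
  (forall s, (sphere R d `\` L) s -> zeta (j s) = j (phi s)) ->
  (* q : Z -> S^d almost one-to-one factor map, identity on S^d \ L_infty *)
  continuous q -> q @` [set: Z] = sphere R d ->
  (forall z, q (zeta z) = phi (q z)) ->
  (forall s, (sphere R d `\` L) s -> q (j s) = s) ->
  dense [set z : Z | forall z' : Z, q z' = q z -> z' = z] ->
  (* W: compact connected Hausdorff space (finite connected CW-complex) *)
  hausdorff_space W -> compact [set: W] -> connected [set: W] ->
  (* h : S^d -> Homeo(W x Q) continuous *)
  cont_homeo_family (sphere R d) ([set: W] `*` hilbert_cube R) h hinv ->
  (* phi~ minimal on S^d x W x Q *)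
  minimal_on (sphere R d `*` ([set: W] `*` hilbert_cube R))
    (fun p => (phi p.1, h p.1 p.2)) ->
  (* conclusion: zeta~ minimal on Z x W x Q *)
  minimal_on ([set: Z] `*` ([set: W] `*` hilbert_cube R))
    (fun p => (zeta p.1, h (q p.1) p.2)).
Proof.
move=> _ _ _ _ _ _ _ _ Z_compact _ _ _ _ _ q_cont q_onto q_semiconj _
  q_injective_dense W_hausdorff W_compact _ _ skew_minimal.
apply: minimal_on_skew_lift q_semiconj q_injective_dense skew_minimal => //.
- apply: prod_hausdorff; first exact: norm_hausdorff.
  apply: prod_hausdorff => //; apply: hausdorff_product => _.
  exact: norm_hausdorff.
- by apply: compact_setX => //; exact: hilbert_cube_compact.
- by rewrite q_onto.
Qed.
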